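(* Let $p$ be an odd prime. If $p\equiv 3\pmod 4$, then $g\big(\tfrac{p^2-1}{4},p^2\big)=p-1$. If $p\equiv 1\pmod 4$, then the Waring number $g\big(\tfrac{p^2-1}{4},p^2\big)$ does not exist.
   Context: For a prime power $q$ and a positive integer $k$, the Waring number $g(k,q)$ is the smallest $s$ (if it exists) such that every element of $\mathbb{F}_q$ is a sum of $s$ $k$-th powers of elements of $\mathbb{F}_q$. *)

From HB Require Import structures.
From mathcomp Require Import all_boot all_order all_algebra all_field.
Set Implicit Arguments. Unset Strict Implicit. Unset Printing Implicit Defensive.
Import GRing.Theory.
Local Open Scope ring_scope.

Definition sum_of_kth_powers (F : finFieldType) (k s : nat) (x : F) : Prop :=
  exists f : 'I_s -> F, x = \sum_(i < s) (f i) ^+ k.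

Definition waring_all (F : finFieldType) (k s : nat) : Prop :=
  forall x : F, sum_of_kth_powers k s x.

Definition is_waring_number (F : finFieldType) (k s : nat) : Prop :=
  waring_all F k s /\ (forall t : nat, waring_all F k t -> (s <= t)%N).

Definition waring_exists (F : finFieldType) (k : nat) : Prop :=
  exists s : nat, waring_all F k s.

From HB Require Import structures.
From mathcomp Require Import all_boot all_order all_algebra all_field.
From mathcomp Require Import cyclic zify ring.
Set Implicit Arguments. Unset Strict Implicit. Unset Printing Implicit Defensive.
Import GRing.Theory.
Local Open Scope ring_scope.

(* Since #|F| - 1 = 4k, the nonzero k-th powers are the fourth roots of unity
   1, -1, w, -w, where w ^ 2 = -1.  If p = 1 (mod 4) they are fixed by the
   Frobenius x |-> x ^ p, hence so is every sum of k-th powers, whereas a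
   generator of the multiplicative group is not.  If p = 3 (mod 4) then
   w ^ p = -w, so F = F_p + F_p w.  An element a + b w with a, b in F_p uses
   at most (p - 1)/2 summands +-1 and (p - 1)/2 summands +-w, and for
   (p - 1)/2 * (1 + w) both halves are needed, since its coordinates
   (p - 1)/2 are at distance (p - 1)/2 from 0 modulo p. *)

Section SumsOfKthPowers.
Variables (F : finFieldType) (k : nat).

Lemma sum_of_kth_powersD s t (x y : F) :
  sum_of_kth_powers k s x -> sum_of_kth_powers k t y ->
  sum_of_kth_powers k (s + t) (x + y).
Proof.
move=> [f ->] [g ->].
exists (fun i => match split i with inl j => f j | inr j => g j end).
rewrite big_split_ord; congr (_ + _); apply: eq_bigr => i _.
  by rewrite (unsplitK (inl i)).
by rewrite (unsplitK (inr i)).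
Qed.

Lemma sum_of_kth_powers_natr n (u : F) : sum_of_kth_powers k n (n%:R * u ^+ k).
Proof.
elim: n => [|n IHn]; first by exists (fun _ => 0); rewrite big_ord0 mul0r.
have u_k : sum_of_kth_powers k 1 (u ^+ k) by exists (fun _ => u); rewrite big_ord1.
by have := sum_of_kth_powersD IHn u_k; rewrite addn1 mulrSr mulrDl mul1r.
Qed.

Hypothesis k_gt0 : (0 < k)%N.

Lemma sum_of_kth_powers0 s : sum_of_kth_powers k s (0 : F).
Proof. by exists (fun _ => 0); rewrite big1 // => i _; rewrite expr0n gtn_eqF. Qed.

Lemma sum_of_kth_powers_leq s t (x : F) :
  (s <= t)%N -> sum_of_kth_powers k s x -> sum_of_kth_powers k t x.
Proof.
move=> le_st x_s; have := sum_of_kth_powersD x_s (sum_of_kth_powers0 (t - s)).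
by rewrite addr0 subnKC.
Qed.

End SumsOfKthPowers.

Lemma eqr_nat_pchar (R : nzRingType) p m n : p \in [pchar R] ->
  (m%:R == n%:R :> R) = (m == n %[mod p])%N.
Proof.
move=> pchar_p; wlog le_nm : m n / (n <= m)%N.
  by move=> W; case/orP: (leq_total n m) => /W //; rewrite eq_sym => ->.
by rewrite eqn_mod_dvd // (dvdn_pcharf pchar_p) natrB // subr_eq0.
Qed.

Lemma expf_card_pred (F : finFieldType) (x : F) : x != 0 -> x ^+ #|F|.-1 = 1.
Proof.
move=> x_neq0; apply: (mulfI x_neq0).
by rewrite mulr1 -exprS prednK ?expf_card //; apply/card_gt0P; exists x.
Qed.

Lemma finField_card_gt1 (F : finFieldType) : (1 < #|F|)%N.
Proof. by rewrite (cardD1 0) (cardD1 1) !inE oner_neq0. Qed.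

Lemma exists_prim_root (F : finFieldType) : exists z : F, (#|F|.-1).-primitive_root z.
Proof.
have F_gt1 := finField_card_gt1 F.
have : has (#|F|.-1).-primitive_root (enum (predC1 (0 : F))).
  apply: has_prim_root.
  - by rewrite -ltnS prednK // ltnW.
  - by apply/allP=> x; rewrite mem_enum => x_neq0; rewrite unity_rootE expf_card_pred.
  - exact: enum_uniq.
  - by rewrite -cardE cardC1.
by case/hasP=> z _; exists z.
Qed.

Lemma root4_cases (F : idomainType) (w y : F) :
  w ^+ 2 = -1 -> y ^+ 4 = 1 -> y \in [:: 1; -1; w; -w].
Proof.
move=> w2 y4.
have : (y - 1) * (y + 1) * ((y - w) * (y + w)) == 0.
  have -> : (y - 1) * (y + 1) * ((y - w) * (y + w)) = (y ^+ 2 - 1) * (y ^+ 2 - w ^+ 2).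
    by ring.
  by rewrite w2 opprK -(subr_sqr _ 1) -exprM expr1n y4 subrr.
by rewrite !mulf_eq0 !subr_eq0 !addr_eq0 !inE -!orbA.
Qed.

Section KthPowersOfOrderFour.
Variables (F : finFieldType) (k : nat).
Hypothesis card_k : #|F|.-1 = (4 * k)%N.

Let k_gt0 : (0 < k)%N.
Proof. by have := finField_card_gt1 F; lia. Qed.

Lemma kth_power_expr4 (x : F) : x != 0 -> (x ^+ k) ^+ 4 = 1.
Proof. by move=> x_neq0; rewrite -exprM mulnC -card_k expf_card_pred. Qed.

Lemma kth_power_pFrobenius_fixed p (x : F) : p \in [pchar F] -> (p %% 4 = 1)%N ->
  (x ^+ k) ^+ p = x ^+ k.
Proof.
move=> pchar_p p_mod4; have [->|x_neq0] := eqVneq x 0.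
  by rewrite expr0n gtn_eqF // expr0n gtn_eqF // prime_gt0 // (pcharf_prime pchar_p).
by rewrite -(expr_mod _ (kth_power_expr4 x_neq0)) p_mod4.
Qed.

Lemma exists_kth_power_sqrtN1 : exists z : F, (z ^+ k) ^+ 2 = -1.
Proof.
have [z z_prim] := exists_prim_root F; exists z.
have w4 : ((z ^+ k) ^+ 2) ^+ 2 = 1.
  by rewrite -!exprM -(prim_expr_order z_prim) card_k; congr (_ ^+ _); lia.
have w2_neq1 : (z ^+ k) ^+ 2 != 1.
  rewrite -exprM -(prim_order_dvd z_prim) card_k.
  by apply/negP => /dvdn_leq; lia.
move/eqP: w4; rewrite -subr_eq0 subr_sqr_1 mulf_eq0.
by rewrite subr_eq0 (negbTE w2_neq1) addr_eq0 => /eqP.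
Qed.

Lemma kth_powerP (z y : F) : (z ^+ k) ^+ 2 = -1 ->
  (exists x, y = x ^+ k) <-> y \in [:: 0; 1; -1; z ^+ k; - z ^+ k].
Proof.
move=> w2; split.
  case=> x ->; have [->|x_neq0] := eqVneq x 0.
    by rewrite expr0n gtn_eqF // mem_head.
  by rewrite inE (root4_cases w2 (kth_power_expr4 x_neq0)) orbT.
rewrite !inE; case/orP=> [|/or4P[]] /eqP ->.
- by exists 0; rewrite expr0n gtn_eqF.
- by exists 1; rewrite expr1n.
- by exists (z ^+ 2); rewrite exprAC.
- by exists z.
- by exists (z ^+ 3); rewrite exprAC exprS w2 mulrN1.
Qed.

End KthPowersOfOrderFour.

Lemma not_waring_exists_pFrobenius_fixed (F : finFieldType) p k :
  p \in [pchar F] -> (p < #|F|)%N -> (forall x : F, (x ^+ k) ^+ p = x ^+ k) ->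
  ~ waring_exists F k.
Proof.
move=> pchar_p p_lt_F kth_fixed [s waring_s].
have p_gt1 := prime_gt1 (pcharf_prime pchar_p).
have [z z_prim] := exists_prim_root F; have [f z_eq] := waring_s z.
have z_fixed : z ^+ p = z.
  rewrite z_eq -(pFrobenius_autE pchar_p) rmorph_sum.
  by apply: eq_bigr => i _; rewrite /= pFrobenius_autE kth_fixed.
have : (#|F|.-1 %| p - 1)%N.
  by rewrite -eqn_mod_dvd 1?ltnW // -(eq_prim_root_expr z_prim) expr1 z_fixed.
by move/dvdn_leq; lia.
Qed.

Lemma leq_of_eq_mod_add_half a b c :
  (a = b + c %[mod 2 * c + 1])%N -> (c <= a + b)%N.
Proof.
move=> eq_mod; case: (leqP (b + c) a) => lt_a; first lia.
have : (2 * c + 1 %| b + c - a)%N by rewrite -eqn_mod_dvd ?(ltnW lt_a) // eq_mod.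
by move/dvdn_leq; lia.
Qed.

Lemma pFrobenius_fixed_coords_eq0 (F : fieldType) p (a b w : F) : p \in [pchar F] ->
  a ^+ p = a -> b ^+ p = b -> w ^+ p != w -> a + b * w = 0 -> a = 0 /\ b = 0.
Proof.
move=> pchar_p a_fixed b_fixed w_not_fixed abw0.
have abwp0 : a + b * w ^+ p = 0.
  have := congr1 (pFrobenius_aut pchar_p) abw0.
  by rewrite rmorphD rmorphM rmorph0 /= !pFrobenius_autE a_fixed b_fixed.
have b0 : b = 0.
  have : b * (w ^+ p - w) == 0.
    have -> : b * (w ^+ p - w) = (a + b * w ^+ p) - (a + b * w) by ring.
    by rewrite abwp0 abw0 subrr.
  by rewrite mulf_eq0 subr_eq0 (negbTE w_not_fixed) orbF => /eqP.
by split=> //; move: abw0; rewrite b0 mul0r addr0.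
Qed.

Section QuadraticExtension.
Variables (F : finFieldType) (p k c : nat) (w : F).
Hypotheses (pchar_p : p \in [pchar F]) (card_F : #|F| = (p ^ 2)%N).
Hypotheses (p_eq : p = (2 * c + 1)%N) (w_not_fixed : w ^+ p != w).
Hypothesis kth_powerP : forall y : F,
  (exists x, y = x ^+ k) <-> y \in [:: 0; 1; -1; w; -w].

Let k_gt0 : (0 < k)%N.
Proof.
rewrite lt0n; apply/eqP => k0; have [x] := (kth_powerP 0).2 (mem_head _ _).
by rewrite k0 expr0 => /eqP; rewrite eq_sym oner_eq0.
Qed.

Lemma natr_coords_eq (a b a' b' : nat) :
  a%:R + b%:R * w = a'%:R + b'%:R * w -> (a = a' %[mod p])%N /\ (b = b' %[mod p])%N.
Proof.
move=> /eqP; rewrite -subr_eq0 => /eqP.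
have -> : a%:R + b%:R * w - (a'%:R + b'%:R * w) = (a%:R - a'%:R) + (b%:R - b'%:R) * w.
  by ring.
have natB_fixed m n : (m%:R - n%:R : F) ^+ p = m%:R - n%:R.
  by rewrite -(pFrobenius_autE pchar_p) rmorphB /= !pFrobenius_aut_nat.
case/(pFrobenius_fixed_coords_eq0 pchar_p (natB_fixed _ _) (natB_fixed _ _) w_not_fixed).
by move=> /eqP + /eqP; rewrite !subr_eq0 !(eqr_nat_pchar _ _ pchar_p) => /eqP-> /eqP->.
Qed.

Lemma natr_coords_onto (x : F) : exists a b : 'I_p, x = a%:R + b%:R * w.
Proof.
pose f (ab : 'I_p * 'I_p) : F := ab.1%:R + ab.2%:R * w.
have f_inj : injective f.
  move=> [a b] [a' b'] /natr_coords_eq; rewrite !modn_small //=.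
  by case=> /val_inj-> /val_inj->.
have : x \in codom f.
  by apply: (inj_card_onto f_inj); rewrite card_prod !card_ord card_F mulnn.
by case/codomP=> -[a b] ->; exists a, b.
Qed.

Lemma sum_of_kth_powers_natr_half a (u : F) : (a < p)%N ->
  (exists x, u = x ^+ k) -> (exists x, - u = x ^+ k) ->
  sum_of_kth_powers k c (a%:R * u).
Proof.
move=> lt_ap [x ->] [y Nu]; case: (leqP a c) => [le_ac|lt_ca].
  exact: sum_of_kth_powers_leq le_ac (sum_of_kth_powers_natr _ _ _).
have -> : a%:R = - (p - a)%:R :> F.
  by apply/eqP; rewrite -addr_eq0 -natrD subnKC ?(pcharf0 pchar_p) // ltnW.
rewrite mulNr -mulrN Nu.
by apply: (sum_of_kth_powers_leq k_gt0 _ (sum_of_kth_powers_natr _ _ _)); lia.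
Qed.

Lemma waring_all_pred : waring_all F k (p - 1).
Proof.
have kth_power y : y \in [:: 0; 1; -1; w; -w] -> exists x, y = x ^+ k.
  by move/kth_powerP.
move=> x; have [a [b ->]] := natr_coords_onto x.
have -> : (p - 1 = c + c)%N by lia.
apply: sum_of_kth_powersD.
  rewrite -[a%:R]mulr1; apply: sum_of_kth_powers_natr_half => //; apply: kth_power.
    by rewrite !inE eqxx orbT.
  by rewrite !inE eqxx !orbT.
by apply: sum_of_kth_powers_natr_half => //; apply: kth_power; rewrite !inE ?opprK eqxx !orbT.
Qed.

(* The four counts tally the summands equal to 1, -1, w and -w respectively. *)
Lemma sum_of_kth_powers_coords t (x : F) : sum_of_kth_powers k t x ->
  exists a1 a2 b1 b2 : nat, (a1 + a2 + b1 + b2 <= t)%N /\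
    x + a2%:R + b2%:R * w = a1%:R + b1%:R * w.
Proof.
case=> f ->; elim: t f => [|t IHt] f.
  by exists 0%N, 0%N, 0%N, 0%N; split; rewrite // big_ord0 !mul0r !addr0.
have [a1 [a2 [b1 [b2 [le_t e]]]]] := IHt (fun i => f (widen_ord (leqnSn t) i)).
have {}e : \sum_(i < t) f (widen_ord (leqnSn t) i) ^+ k =
    a1%:R + b1%:R * w - a2%:R - b2%:R * w by rewrite -e; ring.
have : f ord_max ^+ k \in [:: 0; 1; -1; w; -w] by apply/kth_powerP; exists (f ord_max).
rewrite big_ord_recr /= !inE; case/orP=> [|/or4P[]] /eqP ->.
- by exists a1, a2, b1, b2; split; [lia | rewrite e; ring].
- by exists a1.+1, a2, b1, b2; split; [lia | rewrite e; ring].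
- by exists a1, a2.+1, b1, b2; split; [lia | rewrite e; ring].
- by exists a1, a2, b1.+1, b2; split; [lia | rewrite e; ring].
- by exists a1, a2, b1, b2.+1; split; [lia | rewrite e; ring].
Qed.

Lemma waring_all_leq t : waring_all F k t -> (p - 1 <= t)%N.
Proof.
move=> /(_ (c%:R + c%:R * w)) /sum_of_kth_powers_coords [a1 [a2 [b1 [b2 [le_t e]]]]].
have [] : (a1 = a2 + c %[mod p])%N /\ (b1 = b2 + c %[mod p])%N.
  by apply: natr_coords_eq; rewrite -e !natrD; ring.
rewrite p_eq => /leq_of_eq_mod_add_half le_a /leq_of_eq_mod_add_half le_b; lia.
Qed.

Lemma is_waring_number_pred : is_waring_number F k (p - 1).
Proof. by split; [exact: waring_all_pred | exact: waring_all_leq]. Qed.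

End QuadraticExtension.

Lemma sqrtN1_not_pFrobenius_fixed (F : fieldType) p (w : F) : p \in [pchar F] ->
  (p %% 4 = 3)%N -> w ^+ 2 = -1 -> w ^+ p != w.
Proof.
move=> pchar_p p_mod4 w2; have w4 : w ^+ 4 = 1 by rewrite (exprM w 2 2) w2 sqrrN expr1n.
rewrite -(expr_mod _ w4) p_mod4 exprS w2 mulrN1; apply/eqP => Nw_eq_w.
have : (2%:R : F) * w == 0 by rewrite mulr_natl mulr2n -{1}Nw_eq_w addNr.
rewrite mulf_eq0 -(dvdn_pcharf pchar_p) => /orP[/dvdn_leq|/eqP w0]; first lia.
by move: w2; rewrite w0 expr0n => /eqP; rewrite eq_sym oppr_eq0 oner_eq0.
Qed.

Lemma odd_sqr_pred_div4 p : odd p -> (4 * ((p ^ 2 - 1) %/ 4) = p ^ 2 - 1)%N.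
Proof.
move=> p_odd; rewrite mulnC divnK //.
have -> : p = (2 * p./2 + 1)%N by rewrite -{1}(odd_double_half p) p_odd; lia.
by apply/dvdnP; exists (p./2 * p./2 + p./2)%N; nia.
Qed.

Theorem mainTheorem10 (p : nat) (F : finFieldType) :
  prime p -> odd p -> #|F| = (p ^ 2)%N ->
  ((p %% 4 = 3)%N -> is_waring_number F ((p ^ 2 - 1) %/ 4) (p - 1)) /\
  ((p %% 4 = 1)%N -> ~ waring_exists F ((p ^ 2 - 1) %/ 4)).
Proof.
move=> p_prime p_odd card_F; have pchar_p := card_finPcharP card_F p_prime.
have p_gt1 := prime_gt1 p_prime.
set k := ((p ^ 2 - 1) %/ 4)%N.
have card_k : #|F|.-1 = (4 * k)%N by rewrite odd_sqr_pred_div4 // card_F subn1.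
split=> p_mod4.
  have [z w2] := exists_kth_power_sqrtN1 card_k.
  have p_eq : p = (2 * p./2 + 1)%N by rewrite -{1}(odd_double_half p) p_odd; lia.
  apply: (is_waring_number_pred (w := z ^+ k) pchar_p card_F p_eq).
    exact: sqrtN1_not_pFrobenius_fixed.
  by move=> y; apply: kth_powerP.
apply: (not_waring_exists_pFrobenius_fixed pchar_p); first by rewrite card_F; nia.
by move=> x; apply: (kth_power_pFrobenius_fixed card_k).
Qed.
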